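(* The At-least-1 objective is strategyproof against a manipulator $m^+$ (one who can only add edges) over directed networks. That is, for every $k$, every directed social network $G$, every agent $m$ and every manipulation in which $m$ adds outgoing edges $(m,a)\notin E$ (yielding $G^m$), we have \[\min_{P\in O(G^m)} u(m,P)\le\min_{P\in O(G)} u(m,P)\quad\text{and}\quad \max_{P\in O(G^m)} u(m,P)\le\max_{P\in O(G)} u(m,P),\] where $O(\cdot)$ is the set of At-least-1 solutions, $u(m,P)$ is computed in the true network $G$, and both the minimum and maximum over an empty solution set are taken to be $0$.
   Context: Let $A=\{a_1,\dots,a_n\}$ be a finite nonempty set of agents and $G=\langle A,E\rangle$ a directed graph without self-loops (the social network); $N(a)=\{b:(a,b)\in E\}$. For a coalition $C\subseteq A$ with $a\in C$, $u(a,C)=|C\cap N(a)|$. For $0<k\le n$, $\Pi_k$ is the set of partitions of $A$ into exactly $k$ nonempty coalitions; for $P\in\Pi_k$, $u(a,P)=u(a,C)$ where $C\in P$ contains $a$. The At-least-1 objective: $O(G)$ is the set of all $P\in\Pi_k$ such that every agent has utility at least $1$ (utilities computed in the network in question); if no such $P$ exists the instance is infeasible, $O(G)=\emptyset$, and all agents are considered to have utility $0$. A manipulator $m$ of type $m^+$ in a directed network may add only outgoing edges $(m,a)\notin E$, so $N^m(a)=N(a)$ for all $a\ne m$ in the reported network $G^m$. The utility $u(m,P)$ of the manipulator is always computed with respect to his true neighbours in the original $G$. *)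

From mathcomp Require Import all_boot.
Set Implicit Arguments. Unset Strict Implicit. Unset Printing Implicit Defensive.

Section Coalitions.
Variable T : finType.

Definition no_self_loops (E : rel T) : Prop := forall a, ~~ E a a.

Definition nbhd (E : rel T) (a : T) : {set T} := [set b | E a b].

Definition util_coal (E : rel T) (a : T) (C : {set T}) : nat :=
  #|C :&: nbhd E a|.

Definition util (E : rel T) (a : T) (P : {set {set T}}) : nat :=
  util_coal E a (pblock P a).

Definition is_k_partition (k : nat) (P : {set {set T}}) : bool :=
  partition P [set: T] && (#|P| == k).

Definition atleast1 (E : rel T) (k : nat) : {set {set {set T}}} :=
  [set P | is_k_partition k P && [forall a, 1 <= util E a P]].

(* min / max of f over a set of partitions; both 0 on the empty set *)
Definition min_over (S : {set {set {set T}}}) (f : {set {set T}} -> nat) : nat :=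
  if [pick P in S] is Some P0 then \big[minn/f P0]_(P in S) f P else 0.

Definition max_over (S : {set {set {set T}}}) (f : {set {set T}} -> nat) : nat :=
  \max_(P in S) f P.

Definition plus_manipulation (E Em : rel T) (m : T) : Prop :=
  no_self_loops Em /\
  (forall a, a != m -> forall b, Em a b = E a b) /\
  (forall b, E m b -> Em m b).

End Coalitions.

(* Since m only adds edges out of m, every neighbourhood grows, so every
   At-least-1 partition of G is one of G^m.  Conversely, a partition that is
   feasible in G^m but not in G can only fail in G at m, because all other
   neighbourhoods are unchanged; so it gives m true utility 0.  Enlarging a set
   of partitions by partitions of value 0 raises neither the minimum nor the
   maximum, also under the convention that both are 0 on the empty set. *)

From mathcomp Require Import all_boot all_order.
Import Order.TTheory.

Set Implicit Arguments.
Unset Strict Implicit.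
Unset Printing Implicit Defensive.

Section Extremes.
Variable T : finType.
Implicit Types (S : {set {set {set T}}}) (f : {set {set T}} -> nat).

Lemma min_over_le S f P : P \in S -> min_over S f <= f P.
Proof.
rewrite /min_over -minEnat => SP.
case: pickP => [P0 _|/(_ P)]; last by rewrite SP.
by apply: (@bigmin_le_cond _ nat).
Qed.

Lemma min_over_ge S f c P0 :
  P0 \in S -> (forall P, P \in S -> c <= f P) -> c <= min_over S f.
Proof.
rewrite /min_over -minEnat => SP0 cS.
case: pickP => [P1 SP1|/(_ P0)]; last by rewrite SP0.
by apply/(@bigmin_geP _ nat); split; [exact: cS|].
Qed.

Lemma min_over_set0 f : min_over set0 f = 0.
Proof. by rewrite /min_over; case: pickP => // P; rewrite in_set0. Qed.

Lemma min_over_extend S S' f :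
  S \subset S' -> {in S' :\: S, forall P, f P = 0} -> min_over S' f <= min_over S f.
Proof.
move=> sSS' f0.
have [S0|[P0 SP0]] := set_0Vmem S; last first.
  apply: min_over_ge SP0 _ => P SP.
  exact/min_over_le/(subsetP sSS').
rewrite S0 min_over_set0 {S0}setD0 in f0 *.
have [->|[Q S'Q]] := set_0Vmem S'; first by rewrite min_over_set0.
by rewrite -(f0 Q) ?min_over_le.
Qed.

Lemma max_over_extend S S' f :
  S \subset S' -> {in S' :\: S, forall P, f P = 0} -> max_over S' f <= max_over S f.
Proof.
move=> sSS' f0; apply/bigmax_leqP => P S'P.
have [SP|nSP] := boolP (P \in S); first exact: leq_bigmax_cond.
by rewrite f0 // inE nSP.
Qed.

End Extremes.

Section Networks.
Variable T : finType.
Implicit Types (E : rel T) (a m : T) (P : {set {set T}}).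

Lemma eq_util E E' a P : nbhd E a = nbhd E' a -> util E a P = util E' a P.
Proof. by rewrite /util /util_coal => ->. Qed.

Lemma util_mono E E' a P :
  nbhd E a \subset nbhd E' a -> util E a P <= util E' a P.
Proof. by move=> sEE'; apply/subset_leq_card/setIS. Qed.

Lemma atleast1_mono E E' k :
  (forall a, nbhd E a \subset nbhd E' a) -> atleast1 E k \subset atleast1 E' k.
Proof.
move=> sEE'; apply/subsetP => P; rewrite !inE => /andP[-> /forallP util_pos].
by apply/forallP => a; apply: leq_trans (util_pos a) _; apply: util_mono.
Qed.

Lemma atleast1_new_util0 E E' m k P :
  (forall a, a != m -> nbhd E' a = nbhd E a) ->
  P \in atleast1 E' k :\: atleast1 E k -> util E m P = 0.
Proof.
move=> eqE'E; rewrite !inE => /andP[].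
rewrite negb_and => /orP[/negbTE-> //|/forallPn[a]].
rewrite -ltnNge ltnS leqn0 => /eqP util_a0 /andP[_ /forallP util_pos].
have [<- //|a_m] := eqVneq a m.
by move: (util_pos a); rewrite (eq_util P (eqE'E a a_m)) util_a0.
Qed.

Lemma plus_manipulation_nbhd_sub E Em m a :
  plus_manipulation E Em m -> nbhd E a \subset nbhd Em a.
Proof.
move=> [_ [Em_other Em_m]]; apply/subsetP => b; rewrite !inE.
by have [->|a_m] := eqVneq a m; [exact: Em_m | rewrite Em_other].
Qed.

Lemma plus_manipulation_nbhd_eq E Em m a :
  plus_manipulation E Em m -> a != m -> nbhd Em a = nbhd E a.
Proof. by move=> [_ [Em_other _]] a_m; apply/setP => b; rewrite !inE Em_other. Qed.

End Networks.

Theorem theorem3 (T : finType) (k : nat) (E Em : rel T) (m : T) :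
  0 < k -> k <= #|T| ->
  no_self_loops E ->
  plus_manipulation E Em m ->
  min_over (atleast1 Em k) (util E m) <= min_over (atleast1 E k) (util E m) /\
  max_over (atleast1 Em k) (util E m) <= max_over (atleast1 E k) (util E m).
Proof.
move=> _ _ _ manip.
have sub_sol := atleast1_mono k (fun a => plus_manipulation_nbhd_sub a manip).
have new_sol_util0 : {in atleast1 Em k :\: atleast1 E k, forall P, util E m P = 0}.
  by move=> P; apply: atleast1_new_util0 => a; apply: plus_manipulation_nbhd_eq.
by split; [exact: min_over_extend | exact: max_over_extend].
Qed.
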